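(* Let $n,m,p,q\ge 1$ be integers and let $A\in\mathbb{R}^{n\times n}$, $B\in\mathbb{R}^{n\times m}$, $C\in\mathbb{R}^{p\times n}$. Consider the linear system $$\delta x_t = A\,\delta x_{t-1} + B\,\delta u_{t-1},\qquad \delta z_t = C\,\delta x_t ,$$ with states $\delta x_t\in\mathbb{R}^n$, inputs $\delta u_t\in\mathbb{R}^m$ and outputs $\delta z_t\in\mathbb{R}^p$. Define the $qp\times n$ matrix $$\mathcal{O}_q = \begin{bmatrix} CA^{q-1}\\ CA^{q-2}\\ \vdots\\ CA\\ C\end{bmatrix},$$ and the $qp\times qm$ block matrix $\mathcal{H}_q$ whose $(i,j)$ block ($i,j=1,\dots,q$, blocks of size $p\times m$) equals $CA^{j-i-1}B$ if $j>i$ and $0$ if $j\le i$. Suppose $\mathcal{O}_q$ has full column rank, and let $\mathcal{O}_q^+$ denote its Moore–Penrose pseudoinverse. Define $p\times p$ matrices $\alpha_{t-1},\dots,\alpha_{t-q}$ and $p\times m$ matrices $\beta_{t-1},\dots,\beta_{t-q}$ by $$[\alpha_{t-1}\,|\,\alpha_{t-2}\,|\cdots|\,\alpha_{t-q}] = CA^{q}\mathcal{O}_q^+,$$ $$[\beta_{t-1}\,|\,\beta_{t-2}\,|\cdots|\,\beta_{t-q}] = \begin{bmatrix} CB & CAB & \cdots & CA^{q-1}B\end{bmatrix} - CA^{q}\mathcal{O}_q^+\mathcal{H}_q .$$ Then every trajectory of the system exactly satisfies the ARMA model of order $q$: $$\delta z_t = \alpha_{t-1}\delta z_{t-1}+\cdots+\alpha_{t-q}\delta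 z_{t-q} + \beta_{t-1}\delta u_{t-1}+\cdots+\beta_{t-q}\delta u_{t-q}$$ for all $t$ for which the indices $t-1,\dots,t-q$ are defined.
   Context: The subscripts on $\alpha$ and $\beta$ only indicate which past output/input each coefficient multiplies; for this time-invariant system the coefficients do not depend on $t$. The blocks of $CA^q\mathcal{O}_q^+$ (size $p\times p$) and of the right-hand side of the $\beta$ equation (size $p\times m$) are read left to right. *)

From mathcomp Require Import all_boot all_order all_algebra.
From mathcomp Require Import reals.
Set Implicit Arguments. Unset Strict Implicit. Unset Printing Implicit Defensive.
Import Order.TTheory GRing.Theory Num.Theory.
Local Open Scope ring_scope.

(* Block indexing: an index i : 'I_(q*r) is split as i = blk*r + off,
   with blk : 'I_q (block number, counted from 0) and off : 'I_r. *)
Lemma blk_lt q r (i : 'I_(q * r)) : (i %/ r < q)%N.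
Proof.
case: r i => [|r] i; first by case: i => i; rewrite muln0.
by rewrite ltn_divLR.
Qed.

Lemma off_lt q r (i : 'I_(q * r)) : (i %% r < r)%N.
Proof.
case: r i => [|r] i; first by case: i => i; rewrite muln0.
by rewrite ltn_mod.
Qed.

Lemma bidx_lt q r (k : 'I_q) (j : 'I_r) : (k * r + j < q * r)%N.
Proof.
case: k j => k hk [j hj].
apply: (@leq_trans (k.+1 * r)); first by rewrite mulSn addnC ltn_add2r.
by rewrite leq_mul2r hk orbT.
Qed.

Definition blk q r (i : 'I_(q * r)) : 'I_q := Ordinal (blk_lt i).
Definition off q r (i : 'I_(q * r)) : 'I_r := Ordinal (off_lt i).
Definition bidx q r (k : 'I_q) (j : 'I_r) : 'I_(q * r) := Ordinal (bidx_lt k j).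

(* The Moore-Penrose pseudoinverse X of M, characterized (uniquely) by the
   four Penrose equations (real case: conjugate transpose = transpose). *)
Definition is_pinv (R : realType) (a b : nat)
  (M : 'M[R]_(a, b)) (X : 'M[R]_(b, a)) : Prop :=
  [/\ M *m X *m M = M, X *m M *m X = X,
      (M *m X)^T = M *m X & (X *m M)^T = X *m M].

Section Blocks.
Variables (R : realType) (n m p q : nat).
Variables (A : 'M[R]_n) (B : 'M[R]_(n, m)) (C : 'M[R]_(p, n)).

Definition obsmx : 'M[R]_(q * p, n) :=
  \matrix_(i, j) (C *m A ^+ (q - 1 - blk i)) (off i) j.

Definition hankmx : 'M[R]_(q * p, q * m) :=
  \matrix_(i, j) (if (blk i < blk j)%N
                  then (C *m A ^+ (blk j - blk i - 1) *m B) (off i) (off j)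
                  else 0).

Definition ctrlrow : 'M[R]_(p, q * m) :=
  \matrix_(i, j) (C *m A ^+ (blk j) *m B) i (off j).

(* Given the pseudoinverse Op of O_q:
   alpha k = alpha_{t-1-k} = k-th p x p block of C A^q O_q^+ ,
   beta  k = beta_{t-1-k}  = k-th p x m block of ctrlrow - C A^q O_q^+ H_q. *)
Definition arma_alpha (Op : 'M[R]_(n, q * p)) (k : 'I_q) : 'M[R]_p :=
  \matrix_(i, j) (C *m A ^+ q *m Op) i (bidx k j).

Definition arma_beta (Op : 'M[R]_(n, q * p)) (k : 'I_q) : 'M[R]_(p, m) :=
  \matrix_(i, j) (ctrlrow - C *m A ^+ q *m Op *m hankmx) i (bidx k j).

End Blocks.

From mathcomp Require Import all_boot all_order all_algebra.
From mathcomp Require Import reals zify.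
Set Implicit Arguments. Unset Strict Implicit. Unset Printing Implicit Defensive.
Import Order.TTheory GRing.Theory Num.Theory.
Local Open Scope ring_scope.

(* Unrolling the recursion q steps back from s = t - q gives
     z_t = C A^q x_s + [CB ... CA^(q-1)B] U   and   Z = O_q x_s + H_q U,
   where Z and U stack the q past outputs and inputs, most recent first.
   Full column rank makes O_q^+ a left inverse of O_q, so x_s = O_q^+ (Z - H_q U);
   substituting into the first identity gives exactly the ARMA model. *)

Lemma blk_bidx q r (k : 'I_q) (j : 'I_r) : blk (bidx k j) = k.
Proof.
apply: val_inj => /=; case: j => j hj /=.
by rewrite divnMDl ?(leq_ltn_trans _ hj) // divn_small // addn0.
Qed.

Lemma off_bidx q r (k : 'I_q) (j : 'I_r) : off (bidx k j) = j.
Proof. by apply: val_inj => /=; case: j => j hj /=; rewrite modnMDl modn_small. Qed.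

Lemma bidx_blk_off q r (i : 'I_(q * r)) : bidx (blk i) (off i) = i.
Proof. by apply: val_inj => /=; rewrite -divn_eq. Qed.

Lemma big_bidx (V : nmodType) q r (F : 'I_(q * r) -> V) :
  \sum_(i < q * r) F i = \sum_(k < q) \sum_(j < r) F (bidx k j).
Proof.
rewrite pair_big (reindex (fun kj : 'I_q * 'I_r => bidx kj.1 kj.2)) //=.
exists (fun i => (blk i, off i)) => [[k j] _|i _] /=.
  by rewrite blk_bidx off_bidx.
by rewrite bidx_blk_off.
Qed.

Lemma big_ord_gt (V : nmodType) q k (G : nat -> V) : (k < q)%N ->
  \sum_(l < q) (if (k < l)%N then G l else 0) = \sum_(l < q - k.+1) G (l + k.+1)%N.
Proof.
move=> lt_kq; rewrite -(big_mkord xpredT (fun l => if (k < l)%N then G l else 0)).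
rewrite (big_cat_nat _ (n := k.+1)) //= big_nat_cond big1 ?add0r; last first.
  by move=> l /andP[/andP[_ lt_lk1] _]; rewrite ltnNge -ltnS lt_lk1.
rewrite -{1}(add0n k.+1) big_addn big_mkord.
by apply: eq_bigr => l _; rewrite addnS ltnS leq_addl.
Qed.

Section BlockMatrices.
Variables (R : pzRingType) (q r : nat).

Definition col_block a (M : 'M[R]_(a, q * r)) (k : 'I_q) : 'M[R]_(a, r) :=
  \matrix_(i, j) M i (bidx k j).

Definition row_block a (M : 'M[R]_(q * r, a)) (k : 'I_q) : 'M[R]_(r, a) :=
  \matrix_(i, j) M (bidx k i) j.

Definition stack_col (v : 'I_q -> 'cV[R]_r) : 'cV[R]_(q * r) :=
  \col_i v (blk i) (off i) 0.

Lemma mulmx_stack_col a (M : 'M[R]_(a, q * r)) v :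
  M *m stack_col v = \sum_k col_block M k *m v k.
Proof.
apply/matrixP => i l; rewrite !mxE summxE big_bidx.
apply: eq_bigr => k _; rewrite !mxE; apply: eq_bigr => j _.
by rewrite !mxE blk_bidx off_bidx (ord1 l).
Qed.

Lemma row_block_stack_col v k : row_block (stack_col v) k = v k.
Proof. by apply/matrixP => i l; rewrite !mxE blk_bidx off_bidx (ord1 l). Qed.

Lemma row_blockD a (M N : 'M[R]_(q * r, a)) k :
  row_block (M + N) k = row_block M k + row_block N k.
Proof. by apply/matrixP => i j; rewrite !mxE. Qed.

Lemma row_block_mulmx a b (M : 'M[R]_(q * r, a)) (N : 'M[R]_(a, b)) k :
  row_block (M *m N) k = row_block M k *m N.
Proof. by apply/matrixP => i j; rewrite !mxE; apply: eq_bigr => l _; rewrite mxE. Qed.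

Lemma row_block_inj a (M N : 'M[R]_(q * r, a)) :
  (forall k, row_block M k = row_block N k) -> M = N.
Proof.
move=> eqMN; apply/matrixP => i j; rewrite -(bidx_blk_off i).
by move/matrixP/(_ (off i) j): (eqMN (blk i)); rewrite !mxE.
Qed.

End BlockMatrices.

Lemma pinv_mulVmx (R : realType) a b (M : 'M[R]_(a, b)) X :
  \rank M = b -> is_pinv M X -> X *m M = 1%:M.
Proof.
move=> rankM [MXM _ _ _].
have /row_fullP[L LM] : row_full M by rewrite /row_full rankM.
by rewrite -LM -{2}MXM !mulmxA LM mul1mx.
Qed.

Section Trajectory.
Variables (R : pzRingType) (n m p : nat).
Variables (A : 'M[R]_n) (B : 'M[R]_(n, m)) (C : 'M[R]_(p, n)).
Variables (x : nat -> 'cV[R]_n) (u : nat -> 'cV[R]_m) (z : nat -> 'cV[R]_p).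
Hypothesis hx : forall t, x t.+1 = A *m x t + B *m u t.
Hypothesis hz : forall t, z t = C *m x t.

Lemma state_shift s j :
  x (s + j)%N = A ^+ j *m x s + \sum_(l < j) A ^+ l *m B *m u (s + j - l.+1)%N.
Proof.
elim: j => [|j IHj]; first by rewrite addn0 expr0 mul1mx big_ord0 addr0.
rewrite addnS hx IHj mulmxDr mulmxA mulmxE -exprS big_ord_recl /= -addrA.
congr (_ + _); rewrite addrC expr0 mul1mx subn1 /= mulmx_sumr; congr (_ + _).
by apply: eq_bigr => l _; rewrite !mulmxA mulmxE -exprS /bump /= add1n subSS.
Qed.

Lemma output_shift s j :
  z (s + j)%N = C *m A ^+ j *m x s
                + \sum_(l < j) C *m A ^+ l *m B *m u (s + j - l.+1)%N.
Proof.
rewrite hz state_shift mulmxDr mulmx_sumr mulmxA.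
by congr (_ + _); apply: eq_bigr => l _; rewrite !mulmxA.
Qed.

End Trajectory.

Section ObservabilityStack.
Variables (R : realType) (n m p q : nat).
Variables (A : 'M[R]_n) (B : 'M[R]_(n, m)) (C : 'M[R]_(p, n)).

Lemma row_block_obsmx k : row_block (obsmx q A C) k = C *m A ^+ (q - k.+1).
Proof.
apply/matrixP => i j; rewrite !mxE blk_bidx off_bidx.
by have -> : (q - 1 - k = q - k.+1)%N by lia.
Qed.

Lemma col_block_ctrlrow k : col_block (ctrlrow q A B C) k = C *m A ^+ k *m B.
Proof. by apply/matrixP => i j; rewrite !mxE blk_bidx off_bidx. Qed.

Lemma col_block_row_block_hankmx k l :
  col_block (row_block (hankmx q A B C) k) l =
  if (k < l)%N then C *m A ^+ (l - k.+1) *m B else 0.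
Proof.
apply/matrixP => i j; rewrite !mxE !blk_bidx !off_bidx -subnDA addn1.
by case: ifP; rewrite !mxE.
Qed.

Lemma row_block_hankmx_mulmx (w : nat -> 'cV[R]_m) k :
  row_block (hankmx q A B C) k *m stack_col (fun l : 'I_q => w l) =
  \sum_(l < q - k.+1) C *m A ^+ l *m B *m w (l + k.+1)%N.
Proof.
rewrite mulmx_stack_col.
under eq_bigr => l _ do
  rewrite col_block_row_block_hankmx (fun_if (mulmx^~ _)) mul0mx.
rewrite (big_ord_gt (fun l => C *m A ^+ (l - k.+1) *m B *m w l)) //.
by apply: eq_bigr => l _; rewrite addnK.
Qed.

Variables (x : nat -> 'cV[R]_n) (u : nat -> 'cV[R]_m) (z : nat -> 'cV[R]_p).
Hypothesis hx : forall t, x t.+1 = A *m x t + B *m u t.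
Hypothesis hz : forall t, z t = C *m x t.

Lemma output_ctrlrow s :
  z (s + q)%N = C *m A ^+ q *m x s
                + ctrlrow q A B C *m stack_col (fun k : 'I_q => u (s + q - k.+1)%N).
Proof.
rewrite (output_shift hx hz) mulmx_stack_col; congr (_ + _).
by apply: eq_bigr => k _; rewrite col_block_ctrlrow.
Qed.

Lemma stack_outputs_obsmx s :
  stack_col (fun k : 'I_q => z (s + q - k.+1)%N) =
  obsmx q A C *m x s
  + hankmx q A B C *m stack_col (fun k : 'I_q => u (s + q - k.+1)%N).
Proof.
apply: row_block_inj => k; have lt_kq := ltn_ord k.
rewrite row_blockD !row_block_mulmx row_block_stack_col row_block_obsmx.
rewrite (row_block_hankmx_mulmx (fun l => u (s + q - l.+1)%N)).
have -> : (s + q - k.+1 = s + (q - k.+1))%N by lia.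
rewrite (output_shift hx hz); congr (_ + _); apply: eq_bigr => l _.
by have -> : (s + (q - k.+1) - l.+1 = s + q - (l + k.+1).+1)%N by lia.
Qed.

End ObservabilityStack.

Theorem proposition1 (R : realType) (n m p q : nat)
  (hn : (0 < n)%N) (hm : (0 < m)%N) (hp : (0 < p)%N) (hq : (0 < q)%N)
  (A : 'M[R]_n) (B : 'M[R]_(n, m)) (C : 'M[R]_(p, n))
  (Op : 'M[R]_(n, q * p))
  (hrank : \rank (obsmx q A C) = n)
  (hpinv : is_pinv (obsmx q A C) Op)
  (x : nat -> 'cV[R]_n) (u : nat -> 'cV[R]_m) (z : nat -> 'cV[R]_p)
  (hx : forall t, x t.+1 = A *m x t + B *m u t)
  (hz : forall t, z t = C *m x t) :
  forall t : nat, (q <= t)%N ->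
    z t = \sum_(k < q) (arma_alpha A C Op k *m z (t - k.+1)%N
                        + arma_beta A B C Op k *m u (t - k.+1)%N).
Proof.
move=> t /subnK <-; move: (t - q)%N => s.
set Z := stack_col (fun k : 'I_q => z (s + q - k.+1)%N).
set U := stack_col (fun k : 'I_q => u (s + q - k.+1)%N).
have -> : \sum_(k < q) (arma_alpha A C Op k *m z (s + q - k.+1)%N
                        + arma_beta A B C Op k *m u (s + q - k.+1)%N)
    = C *m A ^+ q *m Op *m Z
      + (ctrlrow q A B C - C *m A ^+ q *m Op *m hankmx q A B C) *m U.
  by rewrite big_split /= !mulmx_stack_col.
rewrite (output_ctrlrow q hx hz) /Z (stack_outputs_obsmx q hx hz) -/U.
rewrite mulmxDr mulmxBl !mulmxA.
rewrite -(mulmxA _ Op) (pinv_mulVmx hrank hpinv) mulmx1.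
by rewrite -addrA; congr (_ + _); rewrite addrC subrK.
Qed.
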